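(* Let $\alpha\in(0,1)$, $\gamma>0$, $\delta>0$, $\lambda>0$, $\epsilon>0$, let $(\bar y,\bar C)$ be an optimal solution of the LP, and let ALG be run on it. For every task $T_{i,j}$, let $\bar E_{i,j}=\sum_{s\in\mathcal V}\sum_{t=0}^u\bar y_{i,j,s,t}|I_t|s^\beta$ and let $E_{i,j}=v_{i,j}s_{i,j}^{\beta-1}$ be the energy consumed by $T_{i,j}$ in the schedule of ALG. Then $$E_{i,j}\le\frac{1}{\gamma^{\beta-1}\alpha^{\beta}}\,\bar E_{i,j}.$$
   Context: Problem MR. Jobs $\mathcal J=\{1,\dots,n\}$, processors $\mathcal P=\{1,\dots,m\}$. Job $j$ has weight $w_j>0$, release date $r_j\ge0$, and a nonempty set of Map tasks and a nonempty set of Reduce tasks, preassigned to processors with at most one task of each job per processor; $T_{i,j}$ is the task of job $j$ on processor $i$, with work $v_{i,j}\ge0$; $\mathcal T,\mathcal M,\mathcal R$ are the sets of all, Map, Reduce tasks. Running a task at speed $s$ for time $v/s$ uses energy $v s^{\beta-1}$ ($\beta>1$ fixed); $E>0$ is the energy budget. Notation: $w_{\min},w_{\max}$ min/max weights, $r_{\max}=\max_j r_j$, $v_{\max}=\max v_{i,j}$, $v_{\min}=\min\{v_{i,j}:v_{i,j}>0\}$, $t_{\max}=\frac{w_{\max}}{w_{\min}}\big(nr_{\max}+n(n+1)(|\mathcal T|v_{\max}^\beta/E)^{1/(\beta-1)}\big)$, $s_L=v_{\min}/t_{\max}$, $s_U=(E/v_{\min})^{1/(\beta-1)}$, $k=\lceil\log_{1+\epsilon}(s_U/s_L)\rceil$,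 $\mathcal V=\{s_L(1+\epsilon)^\ell:0\le\ell\le k\}$. LP: let $u$ be the least integer with $\lambda(1+\delta)^{u-1}\ge t_{\max}$, $\tau_0=0$, $\tau_t=\lambda(1+\delta)^{t-1}$ ($1\le t\le u+1$), $I_t=(\tau_t,\tau_{t+1}]$ of length $|I_t|$, $p_{i,j,s}=v_{i,j}/s$. Variables $y_{i,j,s,t},C_{i,j},C_j\ge0$. Minimize $\sum_jw_jC_j$ s.t. (1) $\sum_s\sum_{t=0}^u y_{i,j,s,t}|I_t|/p_{i,j,s}=1$ for all tasks; (2) $\sum_{j}\sum_s y_{i,j,s,t}\le1$ for all $i,t$; (3) $C_{i,j}\ge\frac12\sum_s y_{i,j,s,0}|I_0|(\frac1{p_{i,j,s}}+1)+\sum_{t=1}^u\sum_s(\frac{y_{i,j,s,t}|I_t|}{p_{i,j,s}}\tau_t+\frac12y_{i,j,s,t}|I_t|)$; (4) $C_j\ge C_{i,j}$; (5) $\sum_{T_{i,j}}\sum_s\sum_t y_{i,j,s,t}|I_t|s^\beta\le E$; (6) for $T_{i,j}\in\mathcal M$, $T_{i',j}\in\mathcal R$, $0\le\ell\le u$: $\sum_{t=0}^\ell\sum_s\frac{y_{i,j,s,t}|I_t|}{p_{i,j,s}}\ge\sum_{t=0}^\ell\sum_s\frac{y_{i',j,s,t}|I_t|}{p_{i',j,s}}$; (7) $y_{i,j,s,t}=0$ whenever $\tau_t<r_j$. Algorithm ALG (parameters $\alpha,\gamma$): from $\bar y$, the $\alpha$-point of a task is $t^\alpha_{i,j}=\min\{\ell:\sum_{t=0}^\ell\sum_s\bar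 y_{i,j,s,t}|I_t|/p_{i,j,s}\ge\alpha\}$, its processing time is $p_{i,j}=\gamma\sum_{t=0}^{t^\alpha_{i,j}}\sum_s\bar y_{i,j,s,t}|I_t|$ and its speed is $s_{i,j}=v_{i,j}/p_{i,j}$ (the tasks are then list-scheduled by $\alpha$-point on their processors). *)

From HB Require Import structures.
From mathcomp Require Import all_boot all_order all_algebra.
From mathcomp Require Import all_classical all_reals all_analysis.
Unset Printing Implicit Defensive.
Import Order.TTheory GRing.Theory Num.Theory.
Local Open Scope ring_scope.

(* Jobs are 'I_nJ, processors 'I_nP.
   isMap i j / isRed i j : job j has a Map / Reduce task on processor i.
   work i j = v_{i,j}, beta = energy exponent, En = energy budget E. *)
Record MRInst (R : realType) := MkMR {
  nJ : nat; nP : nat;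
  wt : 'I_nJ -> R; rel : 'I_nJ -> R;
  isMap : 'I_nP -> 'I_nJ -> bool; isRed : 'I_nP -> 'I_nJ -> bool;
  work : 'I_nP -> 'I_nJ -> R;
  beta : R; En : R }.
Arguments isMap {R m} _ _.
Arguments isRed {R m} _ _.

Section MR.
Variable R : realType.
Variable I : MRInst R.
Local Notation n := (@nJ R I).
Local Notation m := (@nP R I).
Local Notation w := (@wt R I).
Local Notation r := (@rel R I).
Local Notation v := (@work R I).
Local Notation beta := (@beta R I).
Local Notation E := (@En R I).

Definition isTask (i : 'I_m) (j : 'I_n) : bool := isMap i j || isRed i j.

Definition valid_instance : Prop :=
  (0 < n)%N /\
  (forall j, 0 < w j) /\
  (forall j, 0 <= r j) /\
  (forall (i : 'I_m) (j : 'I_n), ~~ (isMap i j && isRed i j)) /\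
  (forall j : 'I_n, exists i : 'I_m, isMap i j) /\
  (forall j : 'I_n, exists i : 'I_m, isRed i j) /\
  (forall i j, isTask i j -> 0 < v i j) /\
  1 < beta /\ 0 < E.

Definition ntasks : nat := #|[set x : 'I_m * 'I_n | isTask x.1 x.2]|.
Definition wmax : R := \big[Num.max/0]_(j < n) w j.
Definition wmin : R := \big[Num.min/wmax]_(j < n) w j.
Definition rmax : R := \big[Num.max/0]_(j < n) r j.
Definition vmax : R := \big[Num.max/0]_(i < m) \big[Num.max/0]_(j < n | isTask i j) v i j.
Definition vmin : R :=
  \big[Num.min/vmax]_(i < m) \big[Num.min/vmax]_(j < n | isTask i j && (0 < v i j)) v i j.

Definition tmax : R :=
  wmax / wmin * (n%:R * rmax +
     n%:R * (n%:R + 1) * powR (ntasks%:R * powR vmax beta / E) (1 / (beta - 1))).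
Definition sL : R := vmin / tmax.
Definition sU : R := powR (E / vmin) (1 / (beta - 1)).

Section Params.
Variables eps delta lambda : R.

Definition kk : int := Num.ceil (ln (sU / sL) / ln (1 + eps)).
(* the speeds of V are speed l, l < nspeeds, i.e. l = 0..k *)
Definition nspeeds : nat := if kk < 0 then 0%N else (absz kk).+1.
Definition speed (l : nat) : R := sL * (1 + eps) ^+ l.

(* tau_0 = 0, tau_t = lambda (1+delta)^(t-1) for t >= 1; |I_t| = tau_{t+1} - tau_t *)
Definition tau (t : nat) : R :=
  if t is t'.+1 then lambda * (1 + delta) ^+ t' else 0.
Definition len (t : nat) : R := tau t.+1 - tau t.

Definition is_u (u : nat) : Prop :=
  tmax <= lambda * powR (1 + delta) (u%:R - 1) /\
  forall u' : nat, tmax <= lambda * powR (1 + delta) (u'%:R - 1) -> (u <= u')%N.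

Variable u : nat.

Definition LPvar := 'I_m -> 'I_n -> nat -> nat -> R.

(* y_{i,j,s,t} |I_t| / p_{i,j,s} with p_{i,j,s} = v_{i,j}/s, s = speed l *)
Definition frac (y : LPvar) i j l t : R := y i j l t * len t / (v i j / speed l).
Definition cum (y : LPvar) i j (L : nat) : R :=
  \sum_(l < nspeeds) \sum_(t < L.+1) frac y i j l t.

Definition LP_feasible (y : LPvar) (Ct : 'I_m -> 'I_n -> R) (C : 'I_n -> R) : Prop :=
  (forall i j (l t : nat), isTask i j -> (l < nspeeds)%N -> (t <= u)%N -> 0 <= y i j l t) /\
      (forall i j, isTask i j -> 0 <= Ct i j) /\ (forall j, 0 <= C j) /\
      (forall i j, isTask i j -> cum y i j u = 1) /\
      (forall i (t : nat), (t <= u)%N ->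
         \sum_(j < n | isTask i j) \sum_(l < nspeeds) y i j l t <= 1) /\
      (forall i j, isTask i j ->
         Ct i j >= 2^-1 * (\sum_(l < nspeeds) y i j l 0%N * len 0%N * ((v i j / speed l)^-1 + 1))
                   + \sum_(1 <= t < u.+1) \sum_(l < nspeeds)
                       (frac y i j l t * tau t + 2^-1 * (y i j l t * len t))) /\
      (forall i j, isTask i j -> C j >= Ct i j) /\
      (\sum_(i < m) \sum_(j < n | isTask i j) \sum_(l < nspeeds) \sum_(t < u.+1)
          y i j l t * len t * powR (speed l) beta <= E) /\
      (forall (i i' : 'I_m) (j : 'I_n), isMap i j -> isRed i' j -> forall L : nat, (L <= u)%N ->
          cum y i j L >= cum y i' j L) /\
      (forall i j (l t : nat), isTask i j -> (l < nspeeds)%N -> (t <= u)%N ->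
          tau t < r j -> y i j l t = 0).

Definition LP_obj (C : 'I_n -> R) : R := \sum_(j < n) w j * C j.

Definition LP_optimal y Ct C : Prop :=
  LP_feasible y Ct C /\
  forall y' Ct' C', LP_feasible y' Ct' C' -> LP_obj C <= LP_obj C'.

Variables alpha gamma : R.

Definition alpha_point (y : LPvar) i j : nat :=
  find (fun L => alpha <= cum y i j L) (iota 0 u.+1).
Definition alg_ptime (y : LPvar) i j : R :=
  gamma * \sum_(l < nspeeds) \sum_(t < (alpha_point y i j).+1) y i j l t * len t.
Definition alg_speed (y : LPvar) i j : R := v i j / alg_ptime y i j.
Definition alg_energy (y : LPvar) i j : R := v i j * powR (alg_speed y i j) (beta - 1).
Definition LP_energy (y : LPvar) i j : R :=
  \sum_(l < nspeeds) \sum_(t < u.+1) y i j l t * len t * powR (speed l) beta.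

End Params.
End MR.

From Pilot Require Import Defs.
From HB Require Import structures.
From mathcomp Require Import all_boot all_order all_algebra.
From mathcomp Require Import all_classical all_reals all_analysis.
From mathcomp Require Import ring.
Import Order.TTheory GRing.Theory Num.Theory.
Local Open Scope ring_scope.

(* Put x_{l,t} := y_{i,j,l,t} |I_t| and let P be the sum of the x_{l,t} up to the alpha-point.
   ALG runs the task at speed v / (gamma P), so gamma^(beta-1) alpha^beta E_{i,j} = P (alpha v / P)^beta.
   Up to the alpha-point the LP has done an alpha-fraction of the work, sum x_{l,t} s_l >= alpha v,
   and by convexity of s |-> s^beta (Jensen with weights x_{l,t} / P)
   sum x_{l,t} s_l^beta >= P (sum x_{l,t} s_l / P)^beta >= P (alpha v / P)^beta;
   the part of the LP energy after the alpha-point is nonnegative. *)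

Lemma powR_tangent_le (R : realType) (b c s : R) : 1 < b -> 0 <= c ->
  b * s * c `^ (b - 1) - (b - 1) * c `^ b <= s `^ b.
Proof.
move=> b1 c0; have b0 : 0 < b by apply: lt_trans b1.
have b10 : 0 < b - 1 by rewrite subr_gt0.
have [s0|s0] := ltP s 0.
  apply: le_trans (powR_ge0 _ _); rewrite subr_le0.
  apply: le_trans (_ : 0 <= _); last by rewrite mulr_ge0 ?powR_ge0 ?ltW.
  by rewrite -mulrA pmulr_rle0 // nmulr_rle0 // powR_ge0.
pose q := b / (b - 1).
have q0 : 0 < q by rewrite divr_gt0.
have conj_bq : b^-1 + q^-1 = 1 by rewrite /q invf_div; field; rewrite gt_eqF.
have := conjugate_powR s0 (powR_ge0 c (b - 1)) b0 q0 conj_bq.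
rewrite -powRrM /q mulrCA mulfV ?gt_eqF // mulr1 invf_div.
have -> : s `^ b / b + c `^ b * ((b - 1) / b) = (s `^ b + (b - 1) * c `^ b) / b.
  by field; rewrite gt_eqF.
rewrite ler_pdivlMr // => young.
by rewrite lerBlDr; apply: le_trans young; rewrite -mulrA mulrC.
Qed.

Lemma powR_mean_le (R : realType) (T : finType) (x s : T -> R) (b : R) :
  1 < b -> (forall k, 0 <= x k) -> 0 < \sum_k x k -> 0 <= \sum_k x k * s k ->
  ((\sum_k x k * s k) / \sum_k x k) `^ b * \sum_k x k <= \sum_k x k * s k `^ b.
Proof.
set X := \sum_k x k; set S := \sum_k x k * s k => b1 x0 X0 S0.
have b0 : 0 < b by apply: lt_trans b1.
set c := S / X; have c0 : 0 <= c by rewrite divr_ge0 // ltW.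
have S_cX : S = c * X by rewrite /c mulfVK ?gt_eqF.
have tangent_sum : \sum_k x k * (b * s k * c `^ (b - 1) - (b - 1) * c `^ b) = c `^ b * X.
  transitivity (b * c `^ (b - 1) * S - (b - 1) * c `^ b * X).
    by rewrite /S /X !mulr_sumr -sumrB; apply: eq_bigr => k _; ring.
  by rewrite S_cX -(mulr_powRB1 c0 b0); ring.
rewrite -tangent_sum; apply: ler_sum => k _.
by rewrite ler_wpM2l // powR_tangent_le.
Qed.

Lemma mulr_powR_quotient (R : realType) (a g v P b : R) :
  0 < a -> 0 < g -> 0 < v -> 0 < P -> 0 < b ->
  v * (v / (g * P)) `^ (b - 1) * (g `^ (b - 1) * a `^ b) = (a * v / P) `^ b * P.
Proof.
move=> a0 g0 v0 P0 b0; set w := v / P.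
have w0 : 0 <= w by rewrite divr_ge0 ?ltW.
have -> : v / (g * P) = w / g by rewrite /w invfM mulrAC mulrA.
have -> : a * v / P = a * w by rewrite /w mulrA.
have split_g : (w / g) `^ (b - 1) * g `^ (b - 1) = w `^ (b - 1).
  by rewrite -powRM ?divfK ?gt_eqF ?divr_ge0 // ltW.
rewrite -(mulr_powRB1 (ltW a0) b0) -(mulr_powRB1 (mulr_ge0 (ltW a0) w0) b0).
rewrite (powRM _ (ltW a0) w0) -split_g.
have -> : v = w * P by rewrite /w divfK ?lt0r_neq0.
by ring.
Qed.

Lemma find_iota_spec (p : pred nat) (N : nat) : p N ->
  (find p (iota 0 N.+1) <= N)%N /\ p (find p (iota 0 N.+1)).
Proof.
move=> pN; have hasp : has p (iota 0 N.+1).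
  by apply/hasP; exists N; rewrite ?mem_iota ?add0n ?leqnn.
have find_lt : (find p (iota 0 N.+1) < N.+1)%N.
  by move: hasp; rewrite has_find size_iota.
split=> //; have := nth_find 0%N hasp.
by rewrite nth_iota.
Qed.

Definition prefix_mass (R : realType) (I : MRInst R) (eps delta lambda : R) (y : LPvar R I)
    i j (L : nat) : R :=
  \sum_(l < nspeeds R I eps) \sum_(t < L.+1) y i j l t * len R delta lambda t.

Section LPEnergyBound.
Context {R : realType} {I : MRInst R} {eps delta lambda alpha : R} {u : nat}.
Context {y : LPvar R I} {i : 'I_(nP R I)} {j : 'I_(nJ R I)}.
Hypotheses (delta_gt0 : 0 < delta) (lambda_gt0 : 0 < lambda).
Hypothesis y_ge0 : forall l t, (l < nspeeds R I eps)%N -> (t <= u)%N -> 0 <= y i j l t.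
Hypothesis work_gt0 : 0 < work R I i j.

Local Notation len := (len R delta lambda).
Local Notation speed := (speed R I eps).
Local Notation nspeeds := (nspeeds R I eps).
Local Notation cum := (cum R I eps delta lambda y i j).
Local Notation v := (work R I i j).
Local Notation beta := (beta R I).
Local Notation mass := (prefix_mass R I eps delta lambda y i j).

Lemma len_ge0 t : 0 <= len t.
Proof.
rewrite /Defs.len /tau; case: t => [|t]; first by rewrite expr0 mulr1 subr0 ltW.
rewrite subr_ge0 ler_pM2l // exprS ler_peMl ?exprn_ge0 ?ltW ?addr_gt0 //.
by rewrite ltrDl.
Qed.

Lemma alpha_point_spec : alpha <= cum u ->
  (alpha_point R I eps delta lambda u alpha y i j <= u)%N /\
  alpha <= cum (alpha_point R I eps delta lambda u alpha y i j).
Proof. exact: (find_iota_spec (fun L => alpha <= cum L)). Qed.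

Lemma weight_ge0 L (l : 'I_nspeeds) (t : 'I_L.+1) : (L <= u)%N -> 0 <= y i j l t * len t.
Proof.
move=> Lu; rewrite mulr_ge0 ?len_ge0 // y_ge0 //.
by apply: leq_trans Lu; rewrite -ltnS.
Qed.

Lemma mass_ge0 L : (L <= u)%N -> 0 <= mass L.
Proof. by move=> Lu; do 2!apply: sumr_ge0 => ? _; apply: weight_ge0. Qed.

Lemma cum_speed_sum L :
  v * cum L = \sum_(l < nspeeds) \sum_(t < L.+1) y i j l t * len t * speed l.
Proof.
rewrite /Defs.cum mulr_sumr; apply: eq_bigr => l _.
rewrite mulr_sumr; apply: eq_bigr => t _.
by rewrite /Defs.frac invf_div; field; rewrite gt_eqF.
Qed.

Lemma LP_energy_prefix_le L : (L <= u)%N ->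
  \sum_(l < nspeeds) \sum_(t < L.+1) y i j l t * len t * speed l `^ beta
    <= LP_energy R I eps delta lambda u y i j.
Proof.
move=> Lu; apply: ler_sum => l _.
rewrite (big_ord_widen u.+1 (fun t => y i j l t * len t * _)) //.
rewrite [leRHS](bigID (fun t : 'I_u.+1 => (t < L.+1)%N)) /= lerDl.
apply: sumr_ge0 => t _.
by rewrite !mulr_ge0 ?powR_ge0 ?len_ge0 // y_ge0 // -ltnS.
Qed.

Lemma LP_energy_ge0 : 0 <= LP_energy R I eps delta lambda u y i j.
Proof.
do 2!apply: sumr_ge0 => ? _.
by rewrite !mulr_ge0 ?powR_ge0 ?len_ge0 // y_ge0 // -ltnS.
Qed.

Lemma prefix_energy_ge L : (L <= u)%N -> 1 < beta -> 0 <= alpha <= cum L ->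
  0 < mass L ->
  (alpha * v / mass L) `^ beta * mass L
    <= \sum_(l < nspeeds) \sum_(t < L.+1) y i j l t * len t * speed l `^ beta.
Proof.
move=> Lu b1 /andP[a0 acum] m0.
have v_cum : alpha * v <= v * cum L by rewrite mulrC ler_pM2l.
rewrite cum_speed_sum /prefix_mass in v_cum m0 *; rewrite !pair_bigA /= in v_cum m0 *.
apply: le_trans (powR_mean_le _ _ _ _ _ b1 _ m0 _) => [|[l t]|].
- have av0 : 0 <= alpha * v by rewrite mulr_ge0 // ltW.
  have b0 : 0 <= beta by apply: le_trans (ltW b1).
  apply: ler_wpM2r; first exact: ltW.
  apply: (ge0_ler_powR b0); rewrite ?nnegrE /=.
  + by rewrite divr_ge0 // ltW.
  + by rewrite divr_ge0 ?(ltW m0) //; apply: le_trans v_cum.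
  + by rewrite ler_pM2r ?invr_gt0.
- exact: weight_ge0.
- by apply: le_trans v_cum; rewrite mulr_ge0 // ltW.
Qed.

End LPEnergyBound.

Theorem lemma3 (R : realType) (I : MRInst R) (alpha gamma delta lambda eps : R)
    (u : nat) (y : 'I_(nP R I) -> 'I_(nJ R I) -> nat -> nat -> R)
    (Ct : 'I_(nP R I) -> 'I_(nJ R I) -> R) (C : 'I_(nJ R I) -> R) :
  valid_instance R I ->
  0 < alpha < 1 -> 0 < gamma -> 0 < delta -> 0 < lambda -> 0 < eps ->
  is_u R I delta lambda u ->
  LP_optimal R I eps delta lambda u y Ct C ->
  forall (i : 'I_(nP R I)) (j : 'I_(nJ R I)), isTask R I i j ->
    alg_energy R I eps delta lambda u alpha gamma y i j <=
    LP_energy R I eps delta lambda u y i j /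
      (powR gamma (beta R I - 1) * powR alpha (beta R I)).
Proof.
move=> [_ [_ [_ [_ [_ [_ [v_gt0 [b1 _]]]]]]]] /andP[a0 a1] g0 d0 l0 _ _.
move=> [[y_ge0 [_ [_ [cum1 _]]]] _] i j ij.
have yij_ge0 l t := y_ge0 i j l t ij.
have v0 := v_gt0 i j ij.
have cum_u : alpha <= cum R I eps delta lambda y i j u by rewrite cum1 // ltW.
have [au acum] := alpha_point_spec cum_u.
set a := alpha_point _ _ _ _ _ _ _ _ _ _ in au acum *.
rewrite /alg_energy /alg_speed /alg_ptime -/a -/(prefix_mass _ _ _ _ _ _ _ _ a).
set P := prefix_mass _ _ _ _ _ _ _ _ a.
have P_ge0 : 0 <= P := mass_ge0 d0 l0 yij_ge0 _ au.
rewrite ler_pdivlMr ?mulr_gt0 ?powR_gt0 //.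
have [P0 | P_gt0] := eqVneq P 0; last first.
  have P_pos : 0 < P by rewrite lt_def P_gt0.
  rewrite mulr_powR_quotient ?(lt_trans ltr01 b1) //.
  apply: le_trans (LP_energy_prefix_le d0 l0 yij_ge0 _ au).
  by apply: (prefix_energy_ge d0 l0 yij_ge0 v0 _ au b1); rewrite ?(ltW a0) ?acum.
rewrite P0 mulr0 invr0 mulr0 powR0 ?mulr0 ?mul0r ?(LP_energy_ge0 d0 l0 yij_ge0) //.
by rewrite subr_eq0 gt_eqF.
Qed.
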